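(* Let $\Omega\subseteq\mathbb{R}^2$ be a compact Borel set, $\rho\in\mathbb{N}$, and for each $i\in\{1,\dots,\rho\}$ let $P_i$ be a dimensional facility with root point $p_i$. Let $\Omega_i=\{q\in\mathbb{R}^2:P_i^q\subseteq\Omega\}$ and $$\Gamma=\{(q_1,\dots,q_\rho)\in\Omega_1\times\dots\times\Omega_\rho:\ \operatorname{int}(P_i^{q_i})\cap\operatorname{int}(P_j^{q_j})=\emptyset\ \text{for all } i,j\in\{1,\dots,\rho\},\ i\neq j\}.$$ Then $\Gamma$ is a compact subset of $\mathbb{R}^{2\rho}$.
   Context: A dimensional facility is a compact set $P\subseteq\mathbb{R}^2$ that is the closure of a nonempty open connected set; each $P_i$ has a distinguished root point $p_i\in P_i$, and for $q\in\mathbb{R}^2$, $P_i^{q}:=P_i+(q-p_i)$ denotes the translate of $P_i$ whose root point is at $q$. *)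

(* Points of R^2 are row vectors 'rV[R]_2;
   R^(2 rho) is represented as rho x 2 matrices 'M[R]_(rho,2) (row i = q_i),
   with the canonical normed (product / max-norm) topology. *)
From HB Require Import structures.
From mathcomp Require Import all_boot all_order all_algebra.
From mathcomp Require Import all_classical all_reals all_analysis.
Set Implicit Arguments. Unset Strict Implicit. Unset Printing Implicit Defensive.
Import Order.TTheory GRing.Theory Num.Theory.
Import numFieldNormedType.Exports.
Local Open Scope classical_set_scope.
Local Open Scope ring_scope.

Definition borel_set {R : realType} (A : set 'rV[R]_2) : Prop :=
  <<s (@open 'rV[R]_2) >> A.

Definition dimensional_facility {R : realType} (P : set 'rV[R]_2) : Prop :=
  compact P /\ exists U : set 'rV[R]_2,
    [/\ open U, U !=set0, connected U & P = closure U].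

Definition translate_root {R : realType} (P : set 'rV[R]_2) (p q : 'rV[R]_2)
  : set 'rV[R]_2 := (fun x => x + (q - p)) @` P.

Definition feasible_roots {R : realType} (Omega P : set 'rV[R]_2) (p : 'rV[R]_2)
  : set 'rV[R]_2 := [set q | translate_root P p q `<=` Omega].

(* Gamma, with Q : 'M_(rho,2) and q_i = row i Q. *)
Definition Gamma_set {R : realType} (rho : nat) (Omega : set 'rV[R]_2)
  (P : 'I_rho -> set 'rV[R]_2) (p : 'I_rho -> 'rV[R]_2) : set 'M[R]_(rho, 2) :=
  [set Q | (forall i, feasible_roots Omega (P i) (p i) (row i Q)) /\
           (forall i j, i != j ->
              interior (translate_root (P i) (p i) (row i Q)) `&`
              interior (translate_root (P j) (p j) (row j Q)) = set0)].

From HB Require Import structures.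
From mathcomp Require Import all_boot all_order all_algebra.
From mathcomp Require Import all_classical all_reals all_analysis.
Import Order.TTheory GRing.Theory Num.Theory.
Import numFieldNormedType.Exports.
Local Open Scope classical_set_scope.
Local Open Scope ring_scope.

(* Every root q_i = p_i + (q_i - p_i) lies in P_i^(q_i), which is contained in
   Omega, so Gamma sits inside the product Omega^rho, compact by Tychonoff.
   Gamma is closed: P^q <= Omega is an intersection over x in P of the closed
   conditions x + (q - p) \in Omega, and since int (P^q) = (int P)^q, a point
   common to two interiors stays common under small moves of the roots, so
   overlapping is an open condition. Neither the Borel measurability of Omega
   nor the shape of the facilities plays any role; only p_i \in P_i does. *)

(* Tychonoff ([rV_compact]) is only available for row vectors, so matrices are
   reached as row vectors of rows. *)
Definition mx_of_rows {T : Type} {m n : nat} (w : 'rV['rV[T]_n]_m) : 'M[T]_(m, n) :=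
  \matrix_(i, j) w ord0 i ord0 j.

Section matrix_rows.
Variables (T : topologicalType) (m n : nat).

Lemma row_continuous (i : 'I_m) : continuous (@row T m n i).
Proof.
move=> Q B /= [E QE sEB].
exists (fun k j => if k == i then E ord0 j else setT) => [k j|Q' Q'E].
  by case: eqP => [->|_]; [have := QE ord0 j; rewrite mxE | exact: filterT].
apply: sEB => a j; rewrite ord1 mxE.
by have := Q'E i j; rewrite eqxx.
Qed.

Lemma mx_of_rows_continuous : continuous (@mx_of_rows T m n).
Proof.
move=> w B /= [E wE sEB].
exists (fun _ i => [set v : 'rV[T]_n | forall j, E i j (v ord0 j)]).
  move=> a i; rewrite [a]ord1; exists (fun _ j => E i j) => [k j|v Ev j].
    by rewrite [k]ord1; have := wE i j; rewrite mxE.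
  exact: Ev.
by move=> w' w'E; apply: sEB => i j; rewrite mxE; apply: w'E.
Qed.

End matrix_rows.

Lemma compact_rowwise {T : ptopologicalType} {m n : nat} {A : set 'rV[T]_n} :
  compact A -> compact [set Q : 'M[T]_(m, n) | forall i, A (row i Q)].
Proof.
move=> cA.
have -> : [set Q : 'M[T]_(m, n) | forall i, A (row i Q)] =
    mx_of_rows @` [set w : 'rV['rV[T]_n]_m | forall i, A (w ord0 i)].
  apply/seteqP; split => [Q AQ|_ [w Aw <-] i].
    exists (\row_i (row i Q)) => [i|]; first by rewrite mxE.
    by apply/matrixP => i j; rewrite !mxE.
  by rewrite (_ : row _ _ = w ord0 i) //; apply/rowP => j; rewrite !mxE.
apply: continuous_compact (rV_compact (fun=> cA)).
exact/continuous_subspaceT/mx_of_rows_continuous.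
Qed.

Section translation.
Context {K : numFieldType} {V : normedModType K}.

Lemma image_addrE (A : set V) (c : V) :
  (fun x => x + c) @` A = [set x | A (x - c)].
Proof.
apply/seteqP; split => [_ [x Ax <-]|x Ax]; first by rewrite /= addrK.
by exists (x - c); rewrite ?subrK.
Qed.

Lemma interior_image_addr (A : set V) (c : V) :
  ((fun x => x + c) @` A)° = (fun x => x + c) @` A°.
Proof.
rewrite !image_addrE; apply/seteqP; split => x; rewrite /interior /=.
  by rewrite -{1}(subrK c x) => /nbhsDl; apply: filterS => y; rewrite /= addrK.
move=> Ax; rewrite -(subrK c x); apply/nbhsDl.
by apply: filterS Ax => y; rewrite /= addrK.
Qed.

Lemma closed_translate_sub (A Omega : set V) (p : V) : closed Omega ->
  closed [set q | (fun x => x + (q - p)) @` A `<=` Omega].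
Proof.
move=> clO.
have -> : [set q | (fun x => x + (q - p)) @` A `<=` Omega] =
    \bigcap_(x in A) ((fun q => x + (q - p)) @^-1` Omega).
  apply/seteqP; split => [q sAO x Ax|q AO _ [x Ax <-]]; last exact: AO.
  by apply: sAO; exists x.
apply: closed_bigI => x _; apply: preimage_closed clO => q _.
by apply: cvgD; [exact: cvg_cst | apply: cvgB; [exact: cvg_id | exact: cvg_cst]].
Qed.

Lemma open_translate_meet {T : topologicalType} (U W : set V) (p p' : V)
    (f g : T -> V) :
  open U -> open W -> continuous f -> continuous g ->
  open [set t | (fun x => x + (f t - p)) @` U `&`
                (fun x => x + (g t - p')) @` W !=set0].
Proof.
move=> oU oW cf cg.
have -> : [set t | (fun x => x + (f t - p)) @` U `&`
                   (fun x => x + (g t - p')) @` W !=set0] =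
    \bigcup_z ((fun t => z - (f t - p)) @^-1` U `&`
               (fun t => z - (g t - p')) @^-1` W).
  apply/seteqP; split => t; rewrite /= !image_addrE.
    by move=> [z [Uz Wz]]; exists z.
  by move=> [z _ [Uz Wz]]; exists z.
apply: bigcup_open => z _; apply: openI; apply: open_comp => // t _.
  by apply: cvgB; [exact: cvg_cst | apply: cvgB; [exact: cf | exact: cvg_cst]].
by apply: cvgB; [exact: cvg_cst | apply: cvgB; [exact: cg | exact: cvg_cst]].
Qed.

End translation.

Lemma interior_translate_root (R : realType) (A : set 'rV[R]_2) (p q : 'rV[R]_2) :
  (translate_root A p q)° = translate_root A° p q.
Proof. exact: interior_image_addr. Qed.

Section placements.
Context {R : realType} {rho : nat} (P : 'I_rho -> set 'rV[R]_2)
  (p : 'I_rho -> 'rV[R]_2).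

Lemma closed_feasible_rows {Omega : set 'rV[R]_2} : closed Omega ->
  closed [set Q : 'M[R]_(rho, 2) |
          forall i, feasible_roots Omega (P i) (p i) (row i Q)].
Proof.
move=> clO.
have -> : [set Q : 'M[R]_(rho, 2) |
           forall i, feasible_roots Omega (P i) (p i) (row i Q)] =
    \bigcap_i (row i @^-1` feasible_roots Omega (P i) (p i)).
  by apply/seteqP; split => [Q AQ i _|Q AQ i]; exact: AQ.
apply: closed_bigI => i _.
apply: preimage_closed; first by move=> Q _; exact: row_continuous.
exact: closed_translate_sub.
Qed.

Lemma closed_disjoint_interiors :
  closed [set Q : 'M[R]_(rho, 2) | forall i j, i != j ->
            (translate_root (P i) (p i) (row i Q))° `&`
            (translate_root (P j) (p j) (row j Q))° = set0].
Proof.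
have -> : [set Q : 'M[R]_(rho, 2) | forall i j, i != j ->
            (translate_root (P i) (p i) (row i Q))° `&`
            (translate_root (P j) (p j) (row j Q))° = set0] =
    \bigcap_(ij in [set ij | ij.1 != ij.2])
      ~` [set Q | translate_root (P ij.1)° (p ij.1) (row ij.1 Q) `&`
                  translate_root (P ij.2)° (p ij.2) (row ij.2 Q) !=set0].
  apply/seteqP; split => Q /= dQ.
    by move=> [i j] /= ij; rewrite -!interior_translate_root dQ // => -[].
  move=> i j ij; apply/seteqP; split => // z zij; apply: (dQ (i, j) ij).
  by exists z; rewrite -!interior_translate_root.
apply: closed_bigI => -[i j] _; rewrite closedC.
by apply: open_translate_meet; try exact: open_interior; exact: row_continuous.
Qed.

End placements.

Theorem lemma2 (R : realType) (Omega : set 'rV[R]_2) (rho : nat)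
  (P : 'I_rho -> set 'rV[R]_2) (p : 'I_rho -> 'rV[R]_2) :
  compact Omega -> borel_set Omega ->
  (forall i, dimensional_facility (P i)) ->
  (forall i, P i (p i)) ->
  compact (Gamma_set Omega P p).
Proof.
move=> cO _ _ Pp.
have clO : closed Omega := compact_closed (@norm_hausdorff _ _) cO.
apply: (subclosed_compact _ (compact_rowwise cO)).
  exact (closedI (closed_feasible_rows P p clO) (closed_disjoint_interiors P p)).
move=> Q [feasQ _] i; apply: (feasQ i).
by exists (p i); rewrite // addrC subrK.
Qed.
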